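(* Let $G$ be a finitely generated virtually nilpotent group and let $A$ be a finite subgroup of $\operatorname{Aut}(G)$ of cardinality $n$. Then the $n$-valued coset group $X=(G,A)$ has polynomial growth: for a finite generating set of $X$ there are constants $C,k>0$ such that $|B(e,r)|\le Cr^k$ for all $r\ge1$, where $B(e,r)$ is the ball of radius $r$ centred at the unit $e$ of $X$.
   Context: An $n$-valued group is a set $X$ with a map $*:X\times X\to\operatorname{Sym}^nX$ ($n$-multi-sets, i.e. unordered $n$-tuples with multiplicities) that is associative (the $n^2$-multi-sets $[x*(y*z)_1,\dots,x*(y*z)_n]$ and $[(x*y)_1*z,\dots,(x*y)_n*z]$ coincide), has a unit $e$ with $e*x=x*e=[x,\dots,x]$, and has an inverse map $\operatorname{inv}$ with $e\in\operatorname{inv}(x)*x$, $e\in x*\operatorname{inv}(x)$. Coset group: for a group $G$ and a finite subgroup $A\le\operatorname{Aut}(G)$ with $|A|=n$, let $X=G/A$ be the set of $A$-orbits and $\pi:G\to X$ the projection; the $n$-valued multiplication is $\pi(g)*\pi(h)=[\pi(g\,a(h)) : a\in A]$, the unit is $\pi(e_G)$ and $\operatorname{inv}(\pi(g))=\pi(g^{-1})$. For a multi-set $M$, $\operatorname{Set}(M)$ is the set of its distinct elements. $S\subseteq X$ generates $X$ if every element lies in $\operatorname{Set}(s_1*\dots*s_m)$ for some $s_i\in S$. The ball of radius $r$ centred at $x$ with respect to $S$ is $B(x,r)=\{y:\exists m\le r,\ s_{i_1},\dots,s_{i_m}\in S,\ y\in\operatorname{Set}(x*s_{i_1}*\dots*s_{i_m})\}$.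 A group is virtually nilpotent if it has a nilpotent subgroup of finite index. *)

From Stdlib Require Import Reals List Arith.
Import ListNotations.
Open Scope R_scope.

Record group := Group {
  carrier :> Type;
  gmul : carrier -> carrier -> carrier;
  gone : carrier;
  ginv : carrier -> carrier;
  gmulA : forall x y z, gmul x (gmul y z) = gmul (gmul x y) z;
  gmul1 : forall x, gmul gone x = x;
  gmulV : forall x, gmul (ginv x) x = gone
}.

Section GroupDefs.
Variable G : group.

Definition is_subgroup (H : G -> Prop) : Prop :=
  H (gone G) /\
  (forall x y, H x -> H y -> H (gmul G x y)) /\
  (forall x, H x -> H (ginv G x)).

Definition gen (P : G -> Prop) : G -> Prop :=
  fun x => forall H, is_subgroup H -> (forall y, P y -> H y) -> H x.

Definition finitely_generated : Prop :=
  exists T : list G, forall x, gen (fun y => In y T) x.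

Definition commg (x y : G) : G :=
  gmul G (gmul G (ginv G x) (ginv G y)) (gmul G x y).

Fixpoint lcs (H : G -> Prop) (i : nat) : G -> Prop :=
  match i with
  | O => H
  | S j => gen (fun z => exists x y, lcs H j x /\ H y /\ z = commg x y)
  end.

Definition nilpotent_subgroup (H : G -> Prop) : Prop :=
  is_subgroup H /\ exists c, forall x, lcs H c x -> x = gone G.

Definition finite_index (H : G -> Prop) : Prop :=
  exists T : list G, forall g, exists t, In t T /\ H (gmul G (ginv G t) g).

Definition virtually_nilpotent : Prop :=
  exists H, nilpotent_subgroup H /\ finite_index H.

Definition is_aut (f : G -> G) : Prop :=
  (forall x y, f (gmul G x y) = gmul G (f x) (f y)) /\
  (forall x y, f x = f y -> x = y) /\ (forall y, exists x, f x = y).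

(* A finite subgroup A of Aut(G) of cardinality n, enumerated without
   repetition as act 0, ..., act (n-1). *)
Definition finite_aut_subgroup (n : nat) (act : nat -> G -> G) : Prop :=
  (forall i, (i < n)%nat -> is_aut (act i)) /\
  (forall i j, (i < n)%nat -> (j < n)%nat ->
      (forall x, act i x = act j x) -> i = j) /\
  (exists i, (i < n)%nat /\ forall x, act i x = x) /\
  (forall i j, (i < n)%nat -> (j < n)%nat -> exists k, (k < n)%nat /\
      forall x, act k x = act i (act j x)) /\
  (forall i, (i < n)%nat -> exists k, (k < n)%nat /\
      forall x, act k (act i x) = x).

Section Coset.
Variables (n : nat) (act : nat -> G -> G).

(* x and y lie in the same A-orbit, i.e. pi x = pi y in X = G/A *)
Definition orb (x y : G) : Prop := exists i, (i < n)%nat /\ act i x = y.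

(* Set(pi(g) * pi(h)) = { pi(g a(h)) : a in A }, as a subset of G closed
   under orb *)
Definition cmul (g h : G) : G -> Prop :=
  fun y => exists i, (i < n)%nat /\ orb (gmul G g (act i h)) y.

(* Set(M * pi(s)) where P = Set(M) *)
Definition setmul (P : G -> Prop) (s : G) : G -> Prop :=
  fun y => exists z, P z /\ cmul z s y.

Definition iprod (x : G) (l : list G) : G -> Prop :=
  fold_left setmul l (orb x).

(* S (given by representatives) generates X *)
Definition generates (S : list G) : Prop :=
  forall x, exists s1 l, In s1 S /\ Forall (fun s => In s S) l /\
    iprod s1 l x.

Definition ball (S : list G) (x : G) (r : nat) : G -> Prop :=
  fun y => exists l, (length l <= r)%nat /\ Forall (fun s => In s S) l /\
    iprod x l y.

(* |B| <= b: B is covered by at most b orbits *)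
Definition card_le (B : G -> Prop) (b : R) : Prop :=
  exists L : list G, INR (length L) <= b /\
    forall y, B y -> exists t, In t L /\ orb t y.

End Coset.
End GroupDefs.

From Stdlib Require Import Reals List Arith Lia ClassicalEpsilon.
Import ListNotations.

(** Every ball of the coset group is covered by the A-orbits of a word ball of
    G for the finite set A·S, so it suffices to bound word growth in G.
    Passing to a nilpotent subgroup H of finite index costs only a constant
    factor (Schreier generators relative to a transversal).  In H, of class c,
    growth is proved by descending the lower central series: in a word over
    a^{±1} and letters g from a deeper set, push every a^{±1} to the right; the
    word becomes a product of at most r conjugates a^{∓j} g a^{±j} (j <= r)
    followed by a power of a, and each such conjugate is a product of at most
    (r+1)^c iterated commutators [g, a, ..., a], which lie one step deeper in
    the series.  Hence each new generator costs only a polynomial factor. *)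

Local Open Scope nat_scope.

Section GroupFacts.
Variable G : group.
Local Notation "x ** y" := (gmul G x y) (at level 40, left associativity).
Local Notation "1" := (gone G).
Local Notation inv := (ginv G).

Lemma mulgV x : x ** inv x = 1.
Proof.
  rewrite <- (gmul1 G (x ** inv x)), <- (gmulV G (inv x)) at 1.
  rewrite <- gmulA, (gmulA G (inv x) x (inv x)), gmulV, gmul1, gmulV.
  reflexivity.
Qed.

Lemma mulg1 x : x ** 1 = x.
Proof. rewrite <- (gmulV G x), gmulA, mulgV, gmul1. reflexivity. Qed.

Lemma mulgI x y z : x ** y = x ** z -> y = z.
Proof.
  intro E.
  rewrite <- (gmul1 G y), <- (gmul1 G z), <- (gmulV G x), <- !gmulA, E.
  reflexivity.
Qed.

Lemma invg_uniq x y : x ** y = 1 -> y = inv x.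
Proof. intro E. apply (mulgI x). rewrite E, mulgV. reflexivity. Qed.

Lemma invgK x : inv (inv x) = x.
Proof. symmetry. apply invg_uniq, gmulV. Qed.

Definition gprod (l : list G) : G := fold_right (gmul G) 1 l.

Lemma gprod_cat l1 l2 : gprod (l1 ++ l2) = gprod l1 ** gprod l2.
Proof.
  induction l1 as [|x l IH]; simpl; [rewrite gmul1 | rewrite IH, gmulA]; reflexivity.
Qed.

Lemma gprod_morph (f : G -> G) :
  (forall x y, f (x ** y) = f x ** f y) -> f 1 = 1 ->
  forall l, f (gprod l) = gprod (map f l).
Proof.
  intros fM f1 l; induction l as [|x l IH]; simpl; [exact f1 | rewrite fM, IH; reflexivity].
Qed.

Lemma gprod_trivial l : (forall x, In x l -> x = 1) -> gprod l = 1.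
Proof.
  induction l as [|x l IH]; intro l1; simpl; [reflexivity|].
  rewrite IH, (l1 x), gmul1; [reflexivity | simpl; auto | intros; apply l1; simpl; auto].
Qed.

Definition conjg (u z : G) : G := inv u ** z ** u.

Lemma conjgM u x y : conjg u (x ** y) = conjg u x ** conjg u y.
Proof.
  unfold conjg. rewrite !gmulA, <- (gmulA G _ u (inv u)), mulgV, mulg1.
  reflexivity.
Qed.

Lemma conjg1 u : conjg u 1 = 1.
Proof. unfold conjg. rewrite mulg1, gmulV. reflexivity. Qed.

Lemma conjgK u z : conjg (inv u) (conjg u z) = z.
Proof.
  unfold conjg.
  rewrite invgK, !gmulA, mulgV, gmul1, <- gmulA, mulgV, mulg1. reflexivity.
Qed.

Lemma mulg_conjg u z : u ** z = conjg (inv u) z ** u.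
Proof. unfold conjg. rewrite invgK, <- gmulA, gmulV, mulg1. reflexivity. Qed.

Lemma mulg_gprod_conjg u l : u ** gprod l = gprod (map (conjg (inv u)) l) ** u.
Proof. rewrite mulg_conjg, gprod_morph; [reflexivity | apply conjgM | apply conjg1]. Qed.

Lemma conjg_commg x a : conjg a x = x ** commg G x a.
Proof. unfold conjg, commg. rewrite !gmulA, mulgV, gmul1. reflexivity. Qed.

Lemma iter_conjgM j u x y :
  Nat.iter j (conjg u) (x ** y) = Nat.iter j (conjg u) x ** Nat.iter j (conjg u) y.
Proof. induction j as [|j IH]; simpl; [|rewrite IH, conjgM]; reflexivity. Qed.

Lemma iter_conjg1 j u : Nat.iter j (conjg u) 1 = 1.
Proof. induction j as [|j IH]; simpl; [|rewrite IH, conjg1]; reflexivity. Qed.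

End GroupFacts.

Section WordBalls.
Variable G : group.
Local Notation "x ** y" := (gmul G x y) (at level 40, left associativity).
Local Notation "1" := (gone G).
Local Notation inv := (ginv G).

Definition word_ball (L : list G) (r : nat) (y : G) : Prop :=
  exists l, length l <= r /\ incl l L /\ y = gprod G l.

Definition ncard_le (B : G -> Prop) (b : nat) : Prop :=
  exists L : list G, length L <= b /\ forall y, B y -> In y L.

Definition symm (L : list G) : list G := L ++ map inv L.

Definition poly_growth (L : list G) : Prop :=
  exists C K, forall r, ncard_le (word_ball (symm L) r) (C * S r ^ K).

Lemma ncard_le_mono (B B' : G -> Prop) b b' :
  (forall y, B y -> B' y) -> b' <= b -> ncard_le B' b' -> ncard_le B b.
Proof. intros BB' le_b [L [hL BL]]. exists L. split; [lia | auto]. Qed.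

Lemma ncard_le_image2 (B B1 B2 : G -> Prop) (f : G -> G -> G) b1 b2 :
  (forall y, B y -> exists x1 x2, B1 x1 /\ B2 x2 /\ y = f x1 x2) ->
  ncard_le B1 b1 -> ncard_le B2 b2 -> ncard_le B (b1 * b2).
Proof.
  intros hB [L1 [h1 BL1]] [L2 [h2 BL2]].
  exists (flat_map (fun x1 => map (f x1) L2) L1). split.
  - rewrite flat_map_constant_length with (c := length L2) by (intros; apply length_map).
    apply Nat.mul_le_mono; assumption.
  - intros y By. destruct (hB y By) as [x1 [x2 [B1x [B2x ->]]]].
    apply in_flat_map. exists x1. split; auto. apply in_map. auto.
Qed.

Lemma word_ball_mono L L' r r' y :
  incl L L' -> r <= r' -> word_ball L r y -> word_ball L' r' y.
Proof.
  intros LL' le_r [l [hl [lL ->]]]. exists l.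
  repeat split; [lia | apply (incl_tran lL LL')].
Qed.

Lemma word_ball1 L r : word_ball L r 1.
Proof. exists []. repeat split; [simpl; lia | apply incl_nil_l]. Qed.

Lemma word_ball_letter L x : In x L -> word_ball L 1 x.
Proof.
  intro Lx. exists [x]. split; [simpl; lia | split].
  - intros y [<-|[]]; exact Lx.
  - simpl. rewrite mulg1. reflexivity.
Qed.

Lemma word_ballM L r1 r2 y1 y2 :
  word_ball L r1 y1 -> word_ball L r2 y2 -> word_ball L (r1 + r2) (y1 ** y2).
Proof.
  intros [l1 [h1 [i1 ->]]] [l2 [h2 [i2 ->]]]. exists (l1 ++ l2).
  rewrite length_app, gprod_cat. repeat split; [lia | apply incl_app; assumption].
Qed.

Lemma word_ball_gprod L k ws :
  (forall y, In y ws -> word_ball L k y) -> word_ball L (length ws * k) (gprod G ws).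
Proof.
  induction ws as [|y ws IH]; intro hws; simpl; [apply word_ball1|].
  apply word_ballM; [apply hws; simpl; auto | apply IH; intros; apply hws; simpl; auto].
Qed.

Lemma ncard_le_word_ball_symm L r b :
  ncard_le (word_ball (symm L) r) b -> ncard_le (word_ball L r) b.
Proof.
  apply ncard_le_mono; [intro y | apply le_n].
  apply word_ball_mono; [apply incl_appl, incl_refl | apply le_n].
Qed.

End WordBalls.

Section CosetBalls.
Variable G : group.
Local Notation "x ** y" := (gmul G x y) (at level 40, left associativity).
Local Notation "1" := (gone G).
Variables (n : nat) (act : nat -> G -> G).
Hypothesis hA : finite_aut_subgroup G n act.
Variable gens : list G.

Definition orbit_gens : list G :=
  flat_map (fun s => map (fun i => act i s) (seq 0 n)) gens.

Definition orbit_covered (k : nat) (P : G -> Prop) : Prop :=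
  forall y, P y -> exists w, word_ball G orbit_gens k w /\ orb G n act w y.

Lemma orbit_covered_setmul k P s :
  In s gens -> orbit_covered k P -> orbit_covered (k + 1) (setmul G n act P s).
Proof.
  intros gs covP y [z [Pz [i [ltin [i' [lti'n Ey]]]]]].
  destruct (covP z Pz) as [w [Bw [j [ltjn Ez]]]].
  destruct hA as [Aaut [_ [_ [Acomp Ainv]]]].
  destruct (Ainv j ltjn) as [j' [ltj'n Ej']].
  destruct (Acomp j' i ltj'n ltin) as [k1 [ltk1n Ek1]].
  destruct (Acomp i' j lti'n ltjn) as [k2 [ltk2n Ek2]].
  (* k1 = j^-1 i, chosen so that act j (w ** act k1 s) = z ** act i s. *)
  assert (Ej : act j (act k1 s) = act i s).
  { rewrite Ek1. destruct (proj2 (proj2 (Aaut j ltjn)) (act i s)) as [x <-].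
    rewrite Ej'. reflexivity. }
  exists (w ** act k1 s). split.
  - apply word_ballM; [exact Bw|]. apply word_ball_letter.
    apply in_flat_map. exists s. split; [exact gs|].
    apply in_map_iff. exists k1. split; [reflexivity | apply in_seq; lia].
  - exists k2. split; [exact ltk2n|].
    rewrite Ek2, (proj1 (Aaut j ltjn)), Ej, Ez. exact Ey.
Qed.

Lemma orbit_covered_iprod l : Forall (fun s => In s gens) l ->
  forall k P, orbit_covered k P ->
  orbit_covered (k + length l) (fold_left (setmul G n act) l P).
Proof.
  induction 1 as [|s l gs _ IH]; intros k P covP; simpl.
  - rewrite Nat.add_0_r. exact covP.
  - replace (k + S (length l)) with (k + 1 + length l) by lia.
    apply IH, orbit_covered_setmul; assumption.
Qed.

Lemma coset_ball_orbit_covered r : orbit_covered r (ball G n act gens 1 r).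
Proof.
  intros y [l [le_lr [gl Bl]]].
  assert (cov1 : orbit_covered 0 (orb G n act 1)).
  { intros y' o. exists 1. split; [apply word_ball1 | exact o]. }
  destruct (orbit_covered_iprod l gl 0 _ cov1 y Bl) as [w [Bw o]].
  exists w. split; [|exact o]. apply (word_ball_mono _ _ _ _ _ _ (incl_refl _) le_lr Bw).
Qed.

Lemma card_le_coset_ball r b (B : R) :
  ncard_le G (word_ball G orbit_gens r) b -> (INR b <= B)%R ->
  card_le G n act (ball G n act gens 1 r) B.
Proof.
  intros [L [lenL BL]] le_bB. exists L. split.
  - apply (Rle_trans _ (INR b)); [apply le_INR, lenL | exact le_bB].
  - intros y By. destruct (coset_ball_orbit_covered r y By) as [w [Bw o]].
    exists w. split; [apply BL, Bw | exact o].
Qed.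

End CosetBalls.

Section Schreier.
Variable G : group.
Local Notation "x ** y" := (gmul G x y) (at level 40, left associativity).
Local Notation "1" := (gone G).
Local Notation inv := (ginv G).
Variables (H : G -> Prop) (T : list G) (tau : G -> G).
Hypothesis tau_spec : forall g, In (tau g) T /\ H (inv (tau g) ** g).

Definition schreier_gens (L : list G) : list G :=
  flat_map (fun s => map (fun t => inv (tau (s ** t)) ** (s ** t)) T) L.

Lemma schreier_gens_sub L x : In x (schreier_gens L) -> H x.
Proof.
  intro Lx. apply in_flat_map in Lx as [s [_ Lx]].
  apply in_map_iff in Lx as [t [<- _]]. apply tau_spec.
Qed.

(* Reading the word from the right, each letter s moves the current coset
   representative t to tau (s ** t), leaving a Schreier generator behind. *)
Lemma gprod_schreier L l : incl l L -> exists t w, In t T /\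
  word_ball G (schreier_gens L) (length l) w /\ gprod G l = t ** w ** inv (tau 1).
Proof.
  induction l as [|s l IH]; intro lL.
  - exists (tau 1), 1. split; [apply tau_spec|]. split; [apply word_ball1|].
    simpl. rewrite mulg1, mulgV. reflexivity.
  - destruct IH as [t [w [Tt [Bw E]]]]; [exact (proj2 (incl_cons_inv lL))|].
    exists (tau (s ** t)), (inv (tau (s ** t)) ** (s ** t) ** w).
    split; [apply tau_spec | split].
    + apply (word_ballM G _ 1); [|exact Bw]. apply word_ball_letter.
      apply in_flat_map. exists s. split; [apply lL; left; reflexivity|].
      apply in_map_iff. exists t. split; [reflexivity | exact Tt].
    + simpl. rewrite E, !gmulA, mulgV, gmul1. reflexivity.
Qed.

Lemma ncard_le_word_ball_schreier L r b :
  ncard_le G (word_ball G (schreier_gens L) r) b ->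
  ncard_le G (word_ball G L r) (length T * b).
Proof.
  apply ncard_le_image2 with (B1 := fun t => In t T)
    (f := fun t w => t ** w ** inv (tau 1)).
  - intros y [l [le_lr [lL ->]]].
    destruct (gprod_schreier L l lL) as [t [w [Tt [Bw E]]]].
    exists t, w. repeat split; [exact Tt | | exact E].
    exact (word_ball_mono G _ _ _ _ _ (incl_refl _) le_lr Bw).
  - exists T. split; auto.
Qed.

End Schreier.

Lemma transversal_choice (G : group) (H : G -> Prop) (T : list G) :
  (forall g, exists t, In t T /\ H (gmul G (ginv G t) g)) ->
  exists tau : G -> G, forall g, In (tau g) T /\ H (gmul G (ginv G (tau g)) g).
Proof.
  intro hT. exists (fun g => proj1_sig (constructive_indefinite_description _ (hT g))).
  intro g. exact (proj2_sig (constructive_indefinite_description _ (hT g))).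
Qed.

Section LowerCentralSeries.
Variable G : group.
Variable H : G -> Prop.
Hypothesis hH : is_subgroup G H.

Lemma gen_subgroup P : is_subgroup G (gen G P).
Proof.
  split; [|split].
  - intros K [K1 _] _. exact K1.
  - intros x y Px Py K hK PK. destruct hK as [K1 [KM KV]].
    apply KM; [apply Px | apply Py]; repeat split; assumption.
  - intros x Px K hK PK. destruct hK as [K1 [KM KV]].
    apply KV, Px; repeat split; assumption.
Qed.

Lemma gen_in (P : G -> Prop) x : P x -> gen G P x.
Proof. intros Px K _ PK. exact (PK x Px). Qed.

Lemma gen_mono (P Q : G -> Prop) x : (forall y, P y -> Q y) -> gen G P x -> gen G Q x.
Proof.
  intros PQ Px. apply Px; [apply gen_subgroup|]. intros y Py. apply gen_in, PQ, Py.
Qed.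

Lemma lcs_subgroup j : is_subgroup G (lcs G H j).
Proof. destruct j; simpl; [exact hH | apply gen_subgroup]. Qed.

Lemma lcs_sub j x : lcs G H j x -> H x.
Proof.
  revert x; induction j as [|j IH]; intros x hx; simpl in hx; [exact hx|].
  apply hx; [exact hH|]. intros z [u [v [hu [hv ->]]]].
  destruct hH as [_ [HM HV]]. unfold commg. apply IH in hu. auto.
Qed.

Lemma lcs_succ_sub j x : lcs G H (S j) x -> lcs G H j x.
Proof.
  revert x; induction j as [|j IH]; intros x hx.
  - exact (lcs_sub 1 x hx).
  - simpl in *. revert hx. apply gen_mono.
    intros z [u [v [hu [hv ->]]]]. exists u, v. auto.
Qed.

Lemma lcs_le j j' x : j <= j' -> lcs G H j' x -> lcs G H j x.
Proof. induction 1; auto using lcs_succ_sub. Qed.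

Lemma lcs_commg j x a : lcs G H j x -> H a -> lcs G H (S j) (commg G x a).
Proof. intros hx ha. apply gen_in. exists x, a. auto. Qed.

Lemma lcs_inv j x : lcs G H j x -> lcs G H j (ginv G x).
Proof. apply (lcs_subgroup j). Qed.

Lemma lcs_symm j L :
  (forall g, In g L -> lcs G H j g) -> forall g, In g (symm G L) -> lcs G H j g.
Proof.
  intros hL g gL. apply in_app_or in gL as [gL|gL]; [auto|].
  apply in_map_iff in gL as [z [<- zL]]. apply lcs_inv; auto.
Qed.

End LowerCentralSeries.

Lemma pow_succ_add_pred j e : 1 <= e -> (j + 1) ^ e + (j + 1) ^ (e - 1) <= (j + 2) ^ e.
Proof.
  intro le1e. destruct e as [|e]; [lia|]. simpl. rewrite Nat.sub_0_r.
  assert ((j + 1) ^ e <= (j + 2) ^ e) by (apply Nat.pow_le_mono_l; lia). nia.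
Qed.

Section IteratedCommutators.
Variable G : group.
Local Notation "1" := (gone G).
Variable H : G -> Prop.
Hypothesis hH : is_subgroup G H.
Variable c : nat.
Hypothesis hc : forall x, lcs G H c x -> x = 1.

Definition iter_commg (a g : G) (k : nat) : G := Nat.iter k (fun z => commg G z a) g.

Lemma lcs_iter_commg a g m k :
  H a -> lcs G H m g -> lcs G H (m + k) (iter_commg a g k).
Proof.
  intros ha hg. induction k as [|k IH]; simpl.
  - rewrite Nat.add_0_r. exact hg.
  - rewrite Nat.add_succ_r. apply lcs_commg; assumption.
Qed.

Lemma iter_commg_trivial a g k : H a -> H g -> c <= k -> iter_commg a g k = 1.
Proof.
  intros ha hg le_ck. apply hc, (lcs_le G H hH c k _ le_ck).
  exact (lcs_iter_commg a g 0 k ha hg).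
Qed.

(* Conjugation by a maps x_k := iter_commg a g k to x_k ** x_(k+1), so j+1
   conjugations of x_k are j conjugations of x_k times j of x_(k+1). *)
Lemma iter_conjg_iter_commg a g : H a -> H g -> forall j k, exists l : list nat,
  length l <= (j + 1) ^ (c - k) /\ (forall i, In i l -> k <= i < c) /\
  gprod G (map (iter_commg a g) l) = Nat.iter j (conjg G a) (iter_commg a g k).
Proof.
  intros ha hg j. induction j as [|j IH]; intro k;
    (destruct (Nat.lt_ge_cases k c) as [lt_kc|le_ck];
     [|exists []; split; [simpl; lia | split; [intros i []|]];
       rewrite iter_commg_trivial, iter_conjg1 by assumption; reflexivity]).
  - exists [k]. rewrite Nat.pow_1_l. split; [reflexivity | split].
    + intros i [<-|[]]; lia.
    + apply mulg1.
  - destruct (IH k) as [l1 [h1 [i1 e1]]], (IH (S k)) as [l2 [h2 [i2 e2]]].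
    exists (l1 ++ l2). split; [|split].
    + rewrite length_app. replace (S j + 1) with (j + 2) by lia.
      replace (c - S k) with (c - k - 1) in h2 by lia.
      pose proof (pow_succ_add_pred j (c - k)). lia.
    + intros i il. apply in_app_or in il as [il|il];
        [apply i1 in il | apply i2 in il]; lia.
    + rewrite map_app, gprod_cat, e1, e2, <- iter_conjgM, Nat.iter_succ_r.
      unfold iter_commg. rewrite conjg_commg. reflexivity.
Qed.

End IteratedCommutators.

Section PushPowers.
Variable G : group.
Local Notation "x ** y" := (gmul G x y) (at level 40, left associativity).
Local Notation "1" := (gone G).
Local Notation inv := (ginv G).
Variable L : list G.

Definition conj_letter (u v : G) (r : nat) (y : G) : Prop :=
  exists g j, In g L /\ j <= r /\
    (y = Nat.iter j (conjg G u) g \/ y = Nat.iter j (conjg G v) g).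

Definition bounded_power (u v : G) (r : nat) (q : G) : Prop :=
  exists j, j <= r /\ (q = Nat.iter j (gmul G u) 1 \/ q = Nat.iter j (gmul G v) 1).

Lemma conj_letter_swap u v r y : conj_letter u v r y -> conj_letter v u r y.
Proof. intros [g [j [gL [le_jr E]]]]. exists g, j. tauto. Qed.

Lemma conj_letter_succ u v r y : conj_letter u v r y -> conj_letter u v (S r) y.
Proof. intros [g [j [gL [le_jr E]]]]. exists g, j. repeat split; auto. Qed.

Lemma conj_letter_conjg u r y :
  conj_letter u (inv u) r y -> conj_letter u (inv u) (S r) (conjg G (inv u) y).
Proof.
  intros [g [j [gL [le_jr [->| ->]]]]].
  - destruct j as [|j].
    + exists g, 1%nat. repeat split; auto; lia.
    + exists g, j. repeat split; [assumption | lia |]. left. apply conjgK.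
  - exists g, (S j). repeat split; [assumption | lia |]. right. reflexivity.
Qed.

Lemma bounded_power_swap u v r q : bounded_power u v r q -> bounded_power v u r q.
Proof. intros [j [le_jr E]]. exists j. tauto. Qed.

Lemma bounded_power_mul u r q :
  bounded_power u (inv u) r q -> bounded_power u (inv u) (S r) (u ** q).
Proof.
  intros [j [le_jr [->| ->]]].
  - exists (S j). split; [lia | left; reflexivity].
  - destruct j as [|j].
    + exists 1%nat. split; [lia | left; reflexivity].
    + exists j. split; [lia | right]. simpl. rewrite gmulA, mulgV, gmul1. reflexivity.
Qed.

Lemma push_power_letter u r ws q :
  (forall y, In y ws -> conj_letter u (inv u) r y) -> bounded_power u (inv u) r q ->
  exists ws', length ws' = length ws /\
    (forall y, In y ws' -> conj_letter u (inv u) (S r) y) /\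
    bounded_power u (inv u) (S r) (u ** q) /\
    u ** (gprod G ws ** q) = gprod G ws' ** (u ** q).
Proof.
  intros hws hq. exists (map (conjg G (inv u)) ws). split; [apply length_map|].
  split; [|split; [apply bounded_power_mul, hq|]].
  - intros y yws. apply in_map_iff in yws as [y' [<- y'ws]].
    apply conj_letter_conjg, hws, y'ws.
  - rewrite gmulA, mulg_gprod_conjg, gmulA. reflexivity.
Qed.

Lemma gprod_push_powers a l :
  (forall x, In x l -> x = a \/ x = inv a \/ In x L) ->
  exists ws q, length ws <= length l /\
    (forall y, In y ws -> conj_letter a (inv a) (length l) y) /\
    bounded_power a (inv a) (length l) q /\ gprod G l = gprod G ws ** q.
Proof.
  induction l as [|s l IH]; intro hl.
  - exists [], 1. split; [reflexivity | split; [intros y [] | split]].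
    + exists 0. split; [lia | left; reflexivity].
    + simpl. rewrite gmul1. reflexivity.
  - destruct IH as [ws [q [lenws [hws [hq E]]]]]; [intros; apply hl; right; auto|].
    simpl length. simpl gprod. rewrite E.
    destruct (hl s (or_introl eq_refl)) as [-> | [-> | sL]].
    + destruct (push_power_letter a _ ws q hws hq) as [ws' [len' [hws' [hq' E']]]].
      exists ws', (a ** q). repeat split; [lia | assumption | assumption | exact E'].
    + assert (hws_inv : forall y, In y ws ->
                          conj_letter (inv a) (inv (inv a)) (length l) y).
      { intros y yws. rewrite invgK. apply conj_letter_swap, hws, yws. }
      assert (hq_inv : bounded_power (inv a) (inv (inv a)) (length l) q).
      { rewrite invgK. apply bounded_power_swap, hq. }
      destruct (push_power_letter (inv a) _ ws q hws_inv hq_inv)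
        as [ws' [len' [hws' [hq' E']]]].
      rewrite invgK in hws', hq'.
      exists ws', (inv a ** q). repeat split; [lia | | apply bounded_power_swap, hq' | exact E'].
      intros y yws'. apply conj_letter_swap, hws', yws'.
    + exists (s :: ws), q. repeat split; [simpl; lia | | |].
      * intros y [<-|yws]; [|apply conj_letter_succ, hws, yws].
        exists s, 0. repeat split; [exact sL | lia | left; reflexivity].
      * destruct hq as [j [le_j Ej]]. exists j. split; [lia | exact Ej].
      * simpl. rewrite gmulA. reflexivity.
Qed.

End PushPowers.

Lemma pow_mul_succ_le r c' K C :
  C * S (r * S r ^ c') ^ K * (2 * S r) <= 2 * C * S r ^ (S c' * K + 1).
Proof.
  assert (h1 : S (r * S r ^ c') <= S r ^ S c').
  { simpl. assert (1 <= S r ^ c') by (apply Nat.neq_0_lt_0, Nat.pow_nonzero; lia). nia. }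
  assert (h2 : S (r * S r ^ c') ^ K <= S r ^ (S c' * K)).
  { rewrite Nat.pow_mul_r. apply Nat.pow_le_mono_l, h1. }
  rewrite Nat.pow_add_r, Nat.pow_1_r.
  replace (2 * C * (S r ^ (S c' * K) * S r)) with (C * S r ^ (S c' * K) * (2 * S r)) by ring.
  apply Nat.mul_le_mono_r, Nat.mul_le_mono_l, h2.
Qed.

Section GrowthStep.
Variable G : group.
Local Notation "1" := (gone G).
Local Notation inv := (ginv G).
Variable H : G -> Prop.
Hypothesis hH : is_subgroup G H.
Variable c : nat.
Hypothesis hc : forall x, lcs G H c x -> x = 1.

Definition commutator_letters (a : G) (E0 : list G) : list G :=
  flat_map (fun g => map (iter_commg G a g) (seq 1 c) ++
                     map (iter_commg G (inv a) g) (seq 1 c)) (symm G E0).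

Lemma in_symm_cons a E0 x : In x (symm G (a :: E0)) -> x = a \/ x = inv a \/ In x (symm G E0).
Proof.
  unfold symm. simpl. intros [<-|xE]; [auto|].
  apply in_app_or in xE as [xE|[<-|xE]]; auto using in_or_app.
Qed.

Lemma in_symm_incl L E x : incl L E -> In x (symm G L) -> In x (symm G E).
Proof. intro LE. apply incl_app_app; [exact LE | apply incl_map, LE]. Qed.

Lemma word_ball_iter_conjg E u g r j : H u -> H g -> j <= r ->
  (forall i, 0 < i < c -> In (iter_commg G u g i) E) -> In g (symm G E) ->
  word_ball G (symm G E) (S r ^ c) (Nat.iter j (conjg G u) g).
Proof.
  intros hu hg le_jr hE gE.
  destruct (iter_conjg_iter_commg G H hH c hc u g hu hg j 0) as [l [lenl [il E']]].
  exists (map (iter_commg G u g) l). rewrite length_map. split; [|split].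
  - rewrite Nat.sub_0_r in lenl. apply (Nat.le_trans _ _ _ lenl), Nat.pow_le_mono_l. lia.
  - intros x xl. apply in_map_iff in xl as [[|i] [<- il']]; [exact gE|].
    apply in_or_app. left. apply hE. specialize (il _ il'). lia.
  - symmetry. exact E'.
Qed.

Lemma word_ball_conj_letter a E0 E r y : H a -> (forall g, In g (symm G E0) -> H g) ->
  incl E0 E -> incl (commutator_letters a E0) E ->
  conj_letter G (symm G E0) a (inv a) r y -> word_ball G (symm G E) (S r ^ c) y.
Proof.
  intros ha hE0 E0E hcomm [g [j [gE0 [le_jr Ey]]]].
  assert (hcomm_g : forall i, 0 < i < c ->
    In (iter_commg G a g i) E /\ In (iter_commg G (inv a) g i) E).
  { intros i lt_i. split; apply hcomm, in_flat_map; exists g; split; try exact gE0;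
      apply in_or_app; [left | right]; apply in_map, in_seq; lia. }
  assert (hg : H g) by (apply hE0, gE0).
  assert (gE : In g (symm G E)) by (apply (in_symm_incl E0), gE0; exact E0E).
  destruct Ey as [-> | ->]; apply word_ball_iter_conjg; try assumption.
  - intros i lt_i. apply (hcomm_g i lt_i).
  - exact (proj2 (proj2 hH) a ha).
  - intros i lt_i. apply (hcomm_g i lt_i).
Qed.

Lemma ncard_le_bounded_power a r : ncard_le G (bounded_power G a (inv a) r) (2 * S r).
Proof.
  exists (map (fun j => Nat.iter j (gmul G a) 1) (seq 0 (S r)) ++
          map (fun j => Nat.iter j (gmul G (inv a)) 1) (seq 0 (S r))).
  rewrite length_app, !length_map, !length_seq. split; [lia|].
  intros q [j [le_jr [->| ->]]]; apply in_or_app; [left|right];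
    apply in_map_iff; exists j; split; auto; apply in_seq; lia.
Qed.

Lemma word_ball_cons_split a E0 E r y : H a -> (forall g, In g (symm G E0) -> H g) ->
  incl E0 E -> incl (commutator_letters a E0) E ->
  word_ball G (symm G (a :: E0)) r y -> exists x q,
    word_ball G (symm G E) (r * S r ^ c) x /\ bounded_power G a (inv a) r q /\
    y = gmul G x q.
Proof.
  intros ha hE0 E0E hcomm [l [le_lr [lsymm ->]]].
  destruct (gprod_push_powers G (symm G E0) a l
              (fun x xl => in_symm_cons a E0 x (lsymm x xl)))
    as [ws [q [lenws [hws [[j [le_j Eq]] E']]]]].
  exists (gprod G ws), q. split; [|split; [exists j; split; [lia | exact Eq] | exact E']].
  apply (word_ball_mono G (symm G E) _ (length ws * S r ^ c)); [apply incl_refl | nia |].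
  apply word_ball_gprod. intros y yws.
  apply (word_ball_mono G (symm G E) _ (S (length l) ^ c));
    [apply incl_refl | apply Nat.pow_le_mono_l; lia |].
  eapply word_ball_conj_letter; eauto.
Qed.

Lemma poly_growth_cons a E0 E : H a -> (forall g, In g (symm G E0) -> H g) ->
  incl E0 E -> incl (commutator_letters a E0) E ->
  poly_growth G E -> poly_growth G (a :: E0).
Proof.
  intros ha hE0 E0E hcomm [C [K growE]].
  exists (2 * C), (S c * K + 1). intro r.
  eapply ncard_le_mono; [intros y hy; exact hy | apply pow_mul_succ_le |].
  apply (ncard_le_image2 G _ (word_ball G (symm G E) (r * S r ^ c))
           (bounded_power G a (inv a) r) (gmul G));
    [| apply growE | apply ncard_le_bounded_power].
  intros y By. exact (word_ball_cons_split a E0 E r y ha hE0 E0E hcomm By).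
Qed.

End GrowthStep.

Section NilpotentGrowth.
Variable G : group.
Local Notation "1" := (gone G).
Variable H : G -> Prop.
Hypothesis hH : is_subgroup G H.
Variable c : nat.
Hypothesis hc : forall x, lcs G H c x -> x = 1.

Definition lcs_poly_growth (m : nat) : Prop :=
  forall F, (forall g, In g F -> lcs G H m g) -> poly_growth G F.

Lemma lcs_poly_growth_ge m : c <= m -> lcs_poly_growth m.
Proof.
  intros le_cm F hF. exists 1%nat, 0. intro r. exists [1]. split; [simpl; lia|].
  intros y [l [_ [lF ->]]]. left. symmetry. apply gprod_trivial.
  intros x xl. apply hc, (lcs_le G H hH c m _ le_cm), (lcs_symm G H hH m F hF), lF, xl.
Qed.

Lemma commutator_letters_lcs m a E0 x :
  lcs G H m a -> (forall g, In g E0 -> lcs G H m g) ->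
  In x (commutator_letters G c a E0) -> lcs G H (S m) x.
Proof.
  intros ha hE0 xc. apply in_flat_map in xc as [g [gE0 xc]].
  assert (hg : lcs G H m g) by exact (lcs_symm G H hH m E0 hE0 g gE0).
  assert (ha' : H a /\ H (ginv G a))
    by (split; apply (lcs_sub G H hH m); auto using lcs_inv).
  apply in_app_or in xc as [xc|xc]; apply in_map_iff in xc as [k [<- kc]];
    apply in_seq in kc; apply (lcs_le G H hH (S m) (m + k)); try lia;
    apply lcs_iter_commg; tauto.
Qed.

Lemma lcs_poly_growth_pred m : lcs_poly_growth (S m) -> lcs_poly_growth m.
Proof.
  intro growSm.
  assert (growm : forall F1 F2, (forall g, In g F1 -> lcs G H m g) ->
            (forall g, In g F2 -> lcs G H (S m) g) -> poly_growth G (F1 ++ F2)).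
  { induction F1 as [|a F1 IH]; intros F2 hF1 hF2; [exact (growSm F2 hF2)|].
    assert (ha : lcs G H m a) by (apply hF1; left; reflexivity).
    assert (hE0 : forall g, In g (F1 ++ F2) -> lcs G H m g).
    { intros g gE0. apply in_app_or in gE0 as [gF1|gF2];
        [apply hF1; right; exact gF1 | apply (lcs_succ_sub G H hH), hF2, gF2]. }
    apply (poly_growth_cons G H hH c hc a (F1 ++ F2)
             (F1 ++ (F2 ++ commutator_letters G c a (F1 ++ F2)))).
    - apply (lcs_sub G H hH m), ha.
    - intros g gE0. apply (lcs_sub G H hH m), (lcs_symm G H hH m _ hE0), gE0.
    - rewrite app_assoc. apply incl_appl, incl_refl.
    - apply incl_appr, incl_appr, incl_refl.
    - apply IH; [intros g gF1; apply hF1; right; exact gF1|].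
      intros g gE. apply in_app_or in gE as [gF2|gc]; [apply hF2, gF2|].
      exact (commutator_letters_lcs m a _ g ha hE0 gc). }
  intros F hF. rewrite <- (app_nil_r F). apply growm; [exact hF | intros g []].
Qed.

Lemma nilpotent_poly_growth F : (forall g, In g F -> H g) -> poly_growth G F.
Proof.
  assert (grow : forall k m, c <= k + m -> lcs_poly_growth m).
  { induction k as [|k IH]; intros m le_c.
    - apply lcs_poly_growth_ge. lia.
    - apply lcs_poly_growth_pred, IH. lia. }
  exact (grow c 0 (Nat.le_add_r c 0) F).
Qed.

End NilpotentGrowth.

Lemma mul_succ_pow_le A K r : 1 <= r -> A * S r ^ K <= (A * 2 ^ K + 1) * r ^ S K.
Proof.
  intro le1r.
  assert (S r ^ K <= 2 ^ K * r ^ K)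
    by (rewrite <- Nat.pow_mul_l; apply Nat.pow_le_mono_l; lia).
  assert (r ^ K <= r ^ S K) by (apply Nat.pow_le_mono_r; lia).
  assert (A * S r ^ K <= A * 2 ^ K * r ^ K)
    by (rewrite <- Nat.mul_assoc; apply Nat.mul_le_mono_l; assumption).
  assert (A * 2 ^ K * r ^ K <= A * 2 ^ K * r ^ S K)
    by (apply Nat.mul_le_mono_l; assumption).
  nia.
Qed.

Local Open Scope R_scope.

Theorem mainTheorem2 (G : group) (n : nat) (act : nat -> G -> G)
  (hfg : finitely_generated G) (hvn : virtually_nilpotent G)
  (hA : finite_aut_subgroup G n act)
  (S : list G) (hS : generates G n act S) :
  exists C k : R, 0 < C /\ 0 < k /\
    forall r : nat, (1 <= r)%nat ->
      card_le G n act (ball G n act S (gone G) r) (C * Rpower (INR r) k).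
Proof.
  destruct hvn as [H [[hH [c hc]] [T hT]]].
  destruct (transversal_choice G H T hT) as [tau tau_spec].
  pose (F := schreier_gens G T tau (orbit_gens G n act S)).
  destruct (nilpotent_poly_growth G H hH c hc F
              (schreier_gens_sub G H T tau tau_spec _)) as [C [K growF]].
  exists (INR (length T * C * 2 ^ K + 1)%nat), (INR (Datatypes.S K)).
  split; [apply lt_0_INR; lia | split; [apply lt_0_INR; lia |]].
  intros r le1r.
  apply (card_le_coset_ball G n act hA S r (length T * (C * Datatypes.S r ^ K))%nat).
  - apply (ncard_le_word_ball_schreier G H T tau tau_spec).
    apply ncard_le_word_ball_symm, growF.
  - rewrite Rpower_pow, <- pow_INR, <- mult_INR by (apply lt_0_INR; lia).
    apply le_INR. rewrite Nat.mul_assoc. apply mul_succ_pow_le, le1r.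
Qed.
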